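(* For $n\ge1$ and $0\le k<n$, $$|\mathbf{I}_{n,k}(210)|=|\mathbf{I}_{n-1}(210)|-\sum_{l=k+1}^{n-4}\sum_{j=l+1}^{n-3}\sum_{i\le j}|\mathbf{I}_{n-3,i}(210)|.$$ Equivalently, $|\mathbf{I}_{n,k}(210)|=|\mathbf{I}_{n-1}(210)|$ if $1\le n\le4$ or $k>n-5\ge0$, and for $0\le k\le n-5$, $$|\mathbf{I}_{n,k}(210)|=|\mathbf{I}_{n-1}(210)|-\frac12\Big[(n-k-4)(n-k-3)\sum_{i=0}^{k+2}|\mathbf{I}_{n-3,i}(210)|+\sum_{i=k+3}^{n-4}(n-i-2)(n+i-2k-5)|\mathbf{I}_{n-3,i}(210)|\Big].$$
   Context: An inversion sequence of length $n$ is an integer sequence $e=e_1\dots e_n$ with $0\le e_i<i$ for all $i$; $\mathbf{I}_n$ denotes the set of these. $\mathbf{I}_n(210)$ is the set of $e\in\mathbf{I}_n$ with no $i$ such that $e_i>e_{i+1}>e_{i+2}$ (avoiding the consecutive pattern $210$). $\mathbf{I}_{n,k}(210)=\{e\in\mathbf{I}_n(210):e_n=k\}$, empty for $k\ge n$. Conventions: $|\mathbf{I}_0(210)|=1$; empty sums are $0$. *)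

From mathcomp Require Import all_boot all_order all_algebra.
Set Implicit Arguments. Unset Strict Implicit. Unset Printing Implicit Defensive.

(* An inversion sequence of length n, 0-indexed: e = e_0 ... e_{n-1} with
   e_i <= i (i.e. e_{i+1} < i+1 in the paper's 1-indexing).  Entries are
   stored in 'I_n (values < n), which is no restriction since e_i <= i < n. *)
Definition is_inv_seq (n : nat) (e : n.-tuple 'I_n) : bool :=
  [forall i : 'I_n, (tnth e i : nat) <= i].

Definition avoids210 (n : nat) (e : n.-tuple 'I_n) : bool :=
  [forall i : 'I_n,
     ~~ [&& (i.+2 < n),
            (nth 0 (map val e) i.+1 < nth 0 (map val e) i)
          & (nth 0 (map val e) i.+2 < nth 0 (map val e) i.+1)]].

Definition I210 (n : nat) : {set n.-tuple 'I_n} :=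
  [set e | is_inv_seq e && avoids210 e].

Definition I210k (n k : nat) : {set n.-tuple 'I_n} :=
  [set e in I210 n | last 0 (map val e) == k].

(* |I_n(210)| ; for n = 0 this is 1 (the empty sequence) *)
Definition cI (n : nat) : nat := #|I210 n|.
Definition cIk (n k : nat) : nat := #|I210k n k|.

From mathcomp Require Import all_boot all_order all_algebra.
From mathcomp Require Import zify.
Set Implicit Arguments. Unset Strict Implicit. Unset Printing Implicit Defensive.

(* Appending x to a 210-avoiding sequence s keeps it 210-avoiding unless the
   last two entries a, b of s satisfy a > b > x ("x closes a 210").  Hence
   the sequences of length m+1 ending in k are exactly the extensions by k
   of the sequences of length m that k does not close:
       cIk (m+1) k = cI m - #{s in I_m(210) | k closes a 210 in s}.
   A sequence of length q+2 closed by k has the form u z y with u in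
   I_q(210), last u <= z, and k < y < z <= q; summing over z = j and y = l
   and grouping the u by their last entry i <= j gives the triple sum. *)

Definition inv_seq (s : seq nat) : bool :=
  all (fun i => nth 0 s i <= i) (iota 0 (size s)).

Definition avoids210_seq (s : seq nat) : bool :=
  all (fun i => ~~ ((nth 0 s i.+1 < nth 0 s i) && (nth 0 s i.+2 < nth 0 s i.+1)))
      (iota 0 (size s).-2).

Definition in210 (s : seq nat) : bool := inv_seq s && avoids210_seq s.

(* appending x to s creates an occurrence of 210 in the last three places *)
Definition closes210 (s : seq nat) (x : nat) : bool :=
  [&& 1 < size s, last 0 s < nth 0 s (size s).-2 & x < last 0 s].

Fixpoint inv_seqs (n : nat) : seq (seq nat) :=
  if n is m.+1 then [seq rcons s x | s <- inv_seqs m, x <- iota 0 n]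
  else [:: [::]].

Lemma inv_seqsS n :
  inv_seqs n.+1 = [seq rcons s x | s <- inv_seqs n, x <- iota 0 n.+1].
Proof. by []. Qed.

Lemma size_inv_seqs n s : s \in inv_seqs n -> size s = n.
Proof.
elim: n s => [|n IH] s; first by rewrite inE => /eqP ->.
by rewrite inv_seqsS => /allpairsP [[t x] [/= /IH Ht _ ->]]; rewrite size_rcons Ht.
Qed.

Lemma uniq_inv_seqs n : uniq (inv_seqs n).
Proof.
elim: n => [|n IH] //; rewrite inv_seqsS.
apply: allpairs_uniq => //; first exact: iota_uniq.
by move=> [a b] [c d] _ _ /= /rcons_inj [-> ->].
Qed.

Lemma inv_seq_rcons s x : inv_seq (rcons s x) = inv_seq s && (x <= size s).
Proof.
rewrite /inv_seq size_rcons -addn1 iotaD add0n /= all_cat /= andbT.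
rewrite nth_rcons ltnn eqxx; congr (_ && _).
by apply: eq_in_all => i; rewrite mem_iota => /andP [_ Hi]; rewrite nth_rcons Hi.
Qed.

Lemma avoids210_seq_rcons s x :
  avoids210_seq (rcons s x) = avoids210_seq s && ~~ closes210 s x.
Proof.
rewrite /avoids210_seq /closes210 size_rcons.
have [Hs|Hs] := ltnP 1 (size s); last by have -> : (size s).+1.-2 = 0 by lia.
rewrite (_ : (size s).+1.-2 = (size s).-2 + 1); last by lia.
rewrite iotaD add0n all_cat /= andbT addn1; congr (_ && _).
  apply: eq_in_all => i; rewrite mem_iota add0n => /andP [_ Hi].
  have H0 : i < size s by lia.
  have H1 : i.+1 < size s by lia.
  have H2 : i.+2 < size s by lia.
  by rewrite !nth_rcons H0 H1 H2.
have -> : (size s).-2.+2 = size s by lia.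
have -> : (size s).-2.+1 = (size s).-1 by lia.
have H0 : (size s).-2 < size s by lia.
have H1 : (size s).-1 < size s by lia.
by rewrite !nth_rcons H0 H1 ltnn eqxx nth_last.
Qed.

Lemma in210_rcons s x :
  in210 (rcons s x) = [&& in210 s, x <= size s & ~~ closes210 s x].
Proof.
rewrite /in210 inv_seq_rcons avoids210_seq_rcons.
by case: (inv_seq s); case: (x <= size s); case: (avoids210_seq s).
Qed.

Lemma mem_inv_seqs n s : (s \in inv_seqs n) = inv_seq s && (size s == n).
Proof.
apply/idP/andP => [Hs | [Is /eqP <-]].
  split; last by rewrite (size_inv_seqs Hs).
  elim: n s Hs => [|n IH] s; first by rewrite inE => /eqP ->.
  rewrite inv_seqsS => /allpairsP [[t x] [Ht Hx ->]].
  rewrite mem_iota /= in Hx.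
  by rewrite inv_seq_rcons IH // (size_inv_seqs Ht) -ltnS.
elim/last_ind: s Is => [|s x IH] //.
rewrite inv_seq_rcons size_rcons inv_seqsS => /andP [Is Hx].
by apply: allpairs_f; [exact: IH | rewrite mem_iota].
Qed.

Lemma nth_val n (e : n.-tuple 'I_n) (i : 'I_n) : nth 0 (map val e) i = tnth e i.
Proof. by rewrite (nth_map i) ?size_tuple // -tnth_nth. Qed.

Lemma is_inv_seqE n (e : n.-tuple 'I_n) : is_inv_seq e = inv_seq (map val e).
Proof.
rewrite /is_inv_seq /inv_seq size_map size_tuple.
apply/forallP/allP => [H i | H i].
  by rewrite mem_iota add0n => /andP [_ Hi]; have := H (Ordinal Hi); rewrite -nth_val.
by have := H i; rewrite mem_iota ltn_ord nth_val; apply.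
Qed.

Lemma avoids210E n (e : n.-tuple 'I_n) : avoids210 e = avoids210_seq (map val e).
Proof.
rewrite /avoids210 /avoids210_seq size_map size_tuple.
apply/forallP/allP => [H i | H i].
  rewrite mem_iota add0n => /andP [_ Hi].
  have Hin : i < n by lia.
  by move: (H (Ordinal Hin)); rewrite /=; have -> : i.+2 < n by lia.
have [Hi2|] := boolP (i.+2 < n); last by [].
by apply: H; rewrite mem_iota; lia.
Qed.

(* Every entry of an inversion sequence is smaller than its length, so each
   list inversion sequence of length n is the value list of an n-tuple. *)
Lemma inv_seq_tuple n s :
  inv_seq s -> size s = n -> exists e : n.-tuple 'I_n, map val e = s.
Proof.
move=> Is Hs.
have Hlt : {in s, forall x, x < n}.
  move=> x /(nthP 0) [i Hi <-]; rewrite -Hs.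
  have := allP Is i; rewrite mem_iota add0n Hi => /(_ isT) Hle.
  exact: leq_ltn_trans Hle Hi.
case: n Hs Hlt => [|m] Hs Hlt; first by exists [tuple]; case: s Hs {Is Hlt}.
have Ht : size (map (@inord m) s) == m.+1 by rewrite size_map Hs.
exists (Tuple Ht); rewrite /= -map_comp; apply: map_id_in => x Hx /=.
exact: inordK (Hlt x Hx).
Qed.

Lemma card_tuples_count n (R : pred (seq nat)) :
  (forall s, R s -> inv_seq s) ->
  #|[pred e : n.-tuple 'I_n | R (map val e)]| = count R (inv_seqs n).
Proof.
move=> RI; rewrite cardE /enum_mem size_filter -enumT.
transitivity (count R [seq map val e | e : n.-tuple 'I_n <- enum {: n.-tuple 'I_n}]).
  by rewrite count_map.
rewrite -!size_filter; apply/perm_size/uniq_perm.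
- rewrite filter_uniq // map_inj_uniq ?enum_uniq // => e1 e2 /(inj_map val_inj).
  exact: val_inj.
- by rewrite filter_uniq // uniq_inv_seqs.
move=> s; rewrite !mem_filter mem_inv_seqs; case Rs: (R s) => //=.
rewrite (RI _ Rs) /=; apply/mapP/eqP => [[e _ ->] | Hsz].
  by rewrite size_map size_tuple.
by have [e He] := inv_seq_tuple (RI _ Rs) Hsz; exists e; rewrite ?mem_enum.
Qed.

Lemma cIE n : cI n = count in210 (inv_seqs n).
Proof.
rewrite /cI /I210 -(@card_tuples_count n in210) => [|s /andP []//].
by apply: eq_card => e; rewrite inE /= is_inv_seqE avoids210E.
Qed.

Lemma cIkE n k :
  cIk n k = count (fun s => in210 s && (last 0 s == k)) (inv_seqs n).
Proof.
rewrite /cIk /I210k -(@card_tuples_count n (fun s => in210 s && (last 0 s == k))).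
  by apply: eq_card => e; rewrite !inE /= is_inv_seqE avoids210E.
by move=> s /andP [/andP []].
Qed.

Lemma count_sum (T : Type) (a : pred T) (l : seq T) :
  count a l = \sum_(x <- l) (a x : nat).
Proof. by rewrite -sum1_count big_mkcond. Qed.

Lemma sum_inv_seqsS (F : seq nat -> nat) m :
  \sum_(s <- inv_seqs m.+1) F s =
  \sum_(s <- inv_seqs m) \sum_(0 <= x < m.+1) F (rcons s x).
Proof. exact: big_allpairs_dep. Qed.

Lemma sum_indicator_eq N x (b : nat -> bool) :
  \sum_(0 <= i < N) (b i && (x == i) : nat) = b x && (x < N).
Proof.
have [Hx|Hx] := ltnP x N.
  rewrite (bigD1_seq x) ?iota_uniq ?mem_iota ?subn0 //= eqxx andbT big1 ?addn0 // => i.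
  by rewrite eq_sym => /negbTE ->; rewrite andbF.
rewrite andbF big1_seq // => i /andP [_]; rewrite mem_iota => /andP [_ Hi].
by case: eqP; rewrite ?andbF // => E; lia.
Qed.

Lemma last_entry_decomposition m k : k <= m ->
  cIk m.+1 k + count (fun s => in210 s && closes210 s k) (inv_seqs m) = cI m.
Proof.
move=> Hk; rewrite cIkE cIE !count_sum sum_inv_seqsS -big_split /=.
apply: eq_big_seq => s Hs.
under eq_bigr do rewrite last_rcons eq_sym.
rewrite sum_indicator_eq in210_rcons (size_inv_seqs Hs) Hk ltnS Hk andbT.
by case: (in210 s); case: (closes210 s k).
Qed.

Lemma closes210_rcons u a x :
  closes210 (rcons u a) x = [&& 0 < size u, a < last 0 u & x < a].
Proof.
rewrite /closes210 size_rcons last_rcons ltnS.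
case: u => [|b u] //=; rewrite -rcons_cons nth_rcons /= ltnSn.
by rewrite (_ : size u = (size (b :: u)).-1) // nth_last.
Qed.

Lemma closed_extension_shape u q z y k : size u = q -> z <= q ->
  (in210 (rcons (rcons u z) y) && closes210 (rcons (rcons u z) y) k : nat) =
  ((k < y) && (y < z)) * (in210 u && (last 0 u <= z)).
Proof.
move=> Hu Hz.
rewrite !in210_rcons !closes210_rcons !size_rcons last_rcons Hu Hz.
have [Hyz|] := ltnP y z; last by rewrite !andbF andbC.
have [Hky|] := ltnP k y; rewrite ?andbF //= mul1n.
have -> : y <= q.+1 by lia.
rewrite /closes210 !andbT; case: q Hu Hz => [|q] Hu Hz; first by lia.
by case: (ltnP z (last 0 u)); rewrite /= ?andbF ?andbT.
Qed.

Lemma sum_nat_indicator a b N (F : nat -> nat) : b <= N ->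
  \sum_(a <= i < b) F i = \sum_(0 <= i < N) ((a <= i) && (i < b)) * F i.
Proof.
move=> HbN; rewrite (big_nat_widenl _ 0) // (big_nat_widen _ _ _ _ _ HbN) big_mkcond.
by apply: eq_bigr => i _; case: (a <= i); case: (i < b); rewrite ?mul1n ?mul0n.
Qed.

Lemma sum_triangle (F : nat -> nat -> nat) q k :
  \sum_(k.+1 <= l < q) \sum_(l.+1 <= j < q.+1) F l j =
  \sum_(0 <= j < q.+1) \sum_(0 <= l < q.+2) ((k < l) && (l < j)) * F l j.
Proof.
rewrite exchange_big_nat (sum_nat_indicator _ _ (leqW (leqnSn q))).
apply: eq_big_nat => l /andP [_ Hl]; rewrite (sum_nat_indicator _ _ (leqnn _)).
rewrite big_distrr; apply: eq_big_nat => j /andP [_ Hj] /=.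
by rewrite Hj; case: (ltnP l j); case: (ltnP k l); case: (ltnP l q);
  rewrite ?muln0 ?mul0n ?mul1n //; lia.
Qed.

Lemma sum_cIk_prefix q j :
  \sum_(0 <= i < j.+1) cIk q i =
  \sum_(u <- inv_seqs q) (in210 u && (last 0 u <= j) : nat).
Proof.
under eq_bigr do rewrite cIkE count_sum.
rewrite exchange_big; apply: eq_bigr => u _.
by rewrite (sum_indicator_eq _ _ (fun=> in210 u)) ltnS.
Qed.

Lemma closed_count m k :
  count (fun s => in210 s && closes210 s k) (inv_seqs m) =
  \sum_(k.+1 <= l < m.+1 - 3) \sum_(l.+1 <= j < m.+1 - 2)
     \sum_(0 <= i < j.+1) cIk (m.+1 - 3) i.
Proof.
case: m => [|[|q]]; [by rewrite big_geq | by rewrite big_geq |].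
have -> : q.+3 - 3 = q by lia.
have -> : q.+3 - 2 = q.+1 by lia.
under eq_bigr do under eq_bigr do rewrite sum_cIk_prefix.
rewrite sum_triangle count_sum !sum_inv_seqsS.
symmetry; under eq_bigr do under eq_bigr do rewrite big_distrr.
under eq_bigr do rewrite exchange_big.
rewrite exchange_big; apply: eq_big_seq => u /size_inv_seqs Hu.
apply: eq_big_nat => z /andP [_ Hz]; apply: eq_bigr => y _.
by rewrite (@closed_extension_shape u q z y k Hu Hz).
Qed.

Import GRing.Theory.
Local Open Scope ring_scope.

Theorem mainTheorem15 (n k : nat) (hn : (1 <= n)%N) (hk : (k < n)%N) :
  (cIk n k)%:Z =
    (cI n.-1)%:Z -
    (\sum_(k.+1 <= l < n - 3) \sum_(l.+1 <= j < n - 2) \sum_(0 <= i < j.+1)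
        cIk (n - 3) i)%:Z.
Proof.
case: n hn hk => [|m] // _ hk.
by rewrite succnK -closed_count -(@last_entry_decomposition m k hk) PoszD addrK.
Qed.
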